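(* Let $A=(a_n)_{n=1}^N$ and $B=(b_n)_{n=1}^{N'}$ be elements of $\mathcal A_1$, and let $\{\mathcal P_n\}_{n=1}^N$, $\{\mathcal Q_n\}_{n=1}^{N'}$ be sequences of pyramids. Then for any integer $M\in[\min\{N,N'\}]$, $$\rho\Big(\sum_{n=1}^N\mathcal P_n^{a_n},\sum_{n=1}^{N'}\mathcal Q_n^{b_n}\Big)\le\sum_{n=1}^M\rho(\mathcal P_n,\mathcal Q_n)+\frac12\|A-B\|_1+\frac12\sum_{n=M+1}^N a_n+\frac12\sum_{n=M+1}^{N'}b_n.$$
   Context: An mm-space is a triple $(X,d_X,\mu_X)$ with $(X,d_X)$ complete separable metric and $\mu_X$ a Borel probability measure; $\mathcal X$ is the set of mm-isomorphism classes. $Y\prec X$ means there is a 1-Lipschitz $f:X\to Y$ with $f_*\mu_X=\mu_Y$. The box distance $\square(X,Y)$ is the infimum of $\max\{\operatorname{dis}(S),1-\pi(S)\}$ over couplings $\pi$ of $\mu_X,\mu_Y$ and Borel $S\subset X\times Y$, $\operatorname{dis}(S)=\sup\{|d_X(x,x')-d_Y(y,y')|:(x,y),(x',y')\in S\}$. A pyramid is a nonempty box-closed subset of $\mathcal X$ closed downward under $\prec$ and directed. $\overline{\mathbb N}=\mathbb N\cup\{\infty\}$, $[N]=\{1,\dots,N\}$ or $\mathbb N$. $\mathcal A_1$: sequences $(a_n)_{n=1}^N$, $N\in\overline{\mathbb N}$, with $a_n\in(0,1]$, $\sum a_n=1$. Direct sum $\sum_{n=1}^N\mathcal P_n^{a_n}$: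 set of $X\in\mathcal X$ admitting $X_n\in\mathcal P_n$ and 1-Lipschitz $f_n:X_n\to X$ with $\mu_X=\sum_na_n(f_n)_*\mu_{X_n}$. For $A=(a_n)_{n=1}^N$, $B=(b_n)_{n=1}^{N'}$, $\|A-B\|_1=\sum_{n\le\min(N,N')}|a_n-b_n|+\sum_{n>\min(N,N')}(\text{remaining terms of the longer sequence})$, i.e. the $\ell^1$ distance after padding the shorter sequence with zeros. For a pyramid $\mathcal P$ and $k\in\mathbb N$, $\mathcal M(\mathcal P;k,k)$ is the set of Borel probability measures $\mu$ on $\mathbb R^k$ supported in $B^k_k=\{x:\|x\|_\infty\le k\}$ such that $(B^k_k,\|\cdot\|_\infty,\mu)\in\mathcal P$. The metric $\rho$ on pyramids is $\rho(\mathcal P,\mathcal Q)=\sum_{k=1}^\infty\frac{1}{2^k}\cdot\frac{1}{2k}(d_{\mathrm P})_{\mathrm H}(\mathcal M(\mathcal P;k,k),\mathcal M(\mathcal Q;k,k))$, where $d_{\mathrm P}$ is the Prokhorov distance on Borel probability measures on $(\mathbb R^k,\|\cdot\|_\infty)$ ($d_{\mathrm P}(\mu,\nu)=\inf\{\varepsilon>0:\mu(U_\varepsilon(A))\ge\nu(A)-\varepsilon\ \forall A\text{ Borel}\}$, $U_\varepsilon$ the open $\varepsilon$-neighborhood) and $(d_{\mathrm P})_{\mathrm H}$ the associated Hausdorff distance. *)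

From HB Require Import structures.
From mathcomp Require Import all_boot all_order all_algebra.
From mathcomp Require Import all_classical all_reals all_analysis.
Set Implicit Arguments. Unset Strict Implicit. Unset Printing Implicit Defensive.
Import Order.TTheory GRing.Theory Num.Theory numFieldNormedType.Exports.
Local Open Scope classical_set_scope.
Local Open Scope ring_scope.

(* Raw data of a (possible) mm-space: a carrier, a distance, and a set function
   (the measure; only its values on Borel sets are meaningful). *)
Record mms (R : realType) := MMS {
  mm_carrier : Type;
  mm_dist : mm_carrier -> mm_carrier -> R;
  mm_meas : set mm_carrier -> R }.
Arguments MMS {R mm_carrier}.
Arguments mm_carrier {R} m.
Arguments mm_dist {R} m _ _.
Arguments mm_meas {R} m _.

Definition is_open_d {R : realType} {T : Type} (d : T -> T -> R) (U : set T) :=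
  forall x, U x -> exists2 r : R, 0 < r & forall y, d x y < r -> U y.

Definition borel_d {R : realType} {T : Type} (d : T -> T -> R) : set (set T) :=
  <<s [set U | is_open_d d U] >>.

Definition is_metric {R : realType} {T : Type} (d : T -> T -> R) :=
  (forall x y, 0 <= d x y) /\ (forall x y, d x y = 0 <-> x = y) /\
  (forall x y, d x y = d y x) /\ (forall x y z, d x z <= d x y + d y z).

Definition is_complete_d {R : realType} {T : Type} (d : T -> T -> R) :=
  forall u : nat -> T,
    (forall e : R, 0 < e -> exists N, forall m n, (N <= m)%N -> (N <= n)%N ->
        d (u m) (u n) < e) ->
    exists x, forall e : R, 0 < e -> exists N, forall n, (N <= n)%N -> d (u n) x < e.

Definition is_separable_d {R : realType} {T : Type} (d : T -> T -> R) :=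
  exists s : nat -> T, forall x (e : R), 0 < e -> exists n, d x (s n) < e.

Definition is_prob_on {R : realType} {T : Type} (B : set (set T)) (mu : set T -> R) :=
  mu setT = 1 /\ (forall A, B A -> 0 <= mu A) /\
  (forall F : nat -> set T, (forall n, B (F n)) -> trivIset setT F ->
     (fun n : nat => \sum_(i < n) mu (F i) : R) @ \oo --> (mu (\bigcup_n F n) : R)).

Definition is_mmspace {R : realType} (X : mms R) :=
  is_metric (mm_dist X) /\ is_complete_d (mm_dist X) /\ is_separable_d (mm_dist X) /\
  is_prob_on (borel_d (mm_dist X)) (mm_meas X).

Definition lip1 {R : realType} {T U : Type} (dT : T -> T -> R) (dU : U -> U -> R)
  (f : T -> U) := forall x x', dU (f x) (f x') <= dT x x'.

(* dominates X Y  :=  Y \prec X *)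
Definition dominates {R : realType} (X Y : mms R) :=
  exists f : mm_carrier X -> mm_carrier Y, lip1 (mm_dist X) (mm_dist Y) f /\
    forall A, borel_d (mm_dist Y) A -> mm_meas X (f @^-1` A) = mm_meas Y A.

Definition prod_dist {R : realType} {T U : Type} (dT : T -> T -> R) (dU : U -> U -> R)
  (p q : T * U) : R := Num.max (dT p.1 q.1) (dU p.2 q.2).

Definition dis {R : realType} {T U : Type} (dT : T -> T -> R) (dU : U -> U -> R)
  (S : set (T * U)) : \bar R :=
  ereal_sup [set r | exists p q, S p /\ S q /\
                     r = (`|dT p.1 q.1 - dU p.2 q.2|)%:E].

Definition coupling {R : realType} (X Y : mms R)
  (pi : set (mm_carrier X * mm_carrier Y) -> R) :=
  is_prob_on (borel_d (prod_dist (mm_dist X) (mm_dist Y))) pi /\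
  (forall A, borel_d (mm_dist X) A -> pi (A `*` setT) = mm_meas X A) /\
  (forall B, borel_d (mm_dist Y) B -> pi (setT `*` B) = mm_meas Y B).

Definition box {R : realType} (X Y : mms R) : \bar R :=
  ereal_inf [set e | exists pi S, coupling pi /\
     borel_d (prod_dist (mm_dist X) (mm_dist Y)) S /\
     e = Order.max (dis (mm_dist X) (mm_dist Y) S) ((1 - pi S)%:E)].

Definition pyramid {R : realType} (P : mms R -> Prop) :=
  (forall X, P X -> is_mmspace X) /\
  (exists X, P X) /\
  (forall X Y, P X -> is_mmspace Y -> dominates X Y -> P Y) /\
  (forall X Y, P X -> P Y -> exists Z, P Z /\ dominates Z X /\ dominates Z Y) /\
  (forall (Xs : nat -> mms R) (X : mms R), (forall n, P (Xs n)) -> is_mmspace X ->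
     (forall e : R, 0 < e -> exists m, forall n, (m <= n)%N -> (box (Xs n) X < e%:E)%E) ->
     P X).

(* ---------- index sets [N], N in N-bar = option nat (None = infinity) ---------- *)

Definition in_idx (N : option nat) (n : nat) : bool :=
  (0 < n)%N && (if N is Some m then (n <= m)%N else true).

Definition pad {R : realType} (N : option nat) (a : nat -> R) (n : nat) : R :=
  if in_idx N n then a n else 0.

Definition rseries {R : realType} (u : nat -> R) (m : nat) : R :=
  limn (fun n => \sum_(m <= i < n) u i).

Definition inA1 {R : realType} (N : option nat) (a : nat -> R) :=
  (forall n, in_idx N n -> 0 < a n <= 1) /\
  (fun n : nat => \sum_(1 <= i < n) pad N a i : R) @ \oo --> (1 : R).

Definition l1dist {R : realType} (N : option nat) (a : nat -> R)
  (N' : option nat) (b : nat -> R) : R :=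
  rseries (fun n => `|pad N a n - pad N' b n|) 1.

Definition dsum {R : realType} (N : option nat) (a : nat -> R)
  (P : nat -> mms R -> Prop) (X : mms R) : Prop :=
  is_mmspace X /\
  exists (Xs : nat -> mms R) (f : forall n, mm_carrier (Xs n) -> mm_carrier X),
    (forall n, in_idx N n -> P n (Xs n) /\ lip1 (mm_dist (Xs n)) (mm_dist X) (f n)) /\
    forall A, borel_d (mm_dist X) A ->
      (fun m : nat => \sum_(1 <= n < m) pad N a n * mm_meas (Xs n) (f n @^-1` A) : R)
        @ \oo --> (mm_meas X A : R).

Definition linf {R : realType} (k : nat) (x y : 'I_k -> R) : R :=
  \big[Num.max/0]_(i < k) `|x i - y i|.
Arguments linf {R} k x y.

Definition cube_set {R : realType} (k : nat) : set ('I_k -> R) :=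
  [set x | linf k x (fun _ => 0) <= k%:R].

Arguments cube_set {R} k.

Definition cube (R : realType) (k : nat) :=
  {x : 'I_k -> R | linf k x (fun _ => 0) <= k%:R}.

Definition cube_mms {R : realType} (k : nat) (mu : set ('I_k -> R) -> R) : mms R :=
  @MMS R (cube R k) (fun x y => linf k (sval x) (sval y)) (fun A => mu (sval @` A)).

Arguments cube_mms {R} k mu.

Definition Mset {R : realType} (P : mms R -> Prop) (k : nat) : set (set ('I_k -> R) -> R) :=
  [set mu | is_prob_on (borel_d (linf k)) mu /\ mu (~` cube_set k) = 0 /\
            P (cube_mms k mu)].

Arguments Mset {R} P k.

Definition prokhorov {R : realType} (k : nat) (mu nu : set ('I_k -> R) -> R) : R :=
  inf [set e : R | 0 < e /\ forall A, borel_d (linf k) A ->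
         nu A - e <= mu [set x | exists2 y, A y & linf k x y < e]].
Arguments prokhorov {R} k mu nu.

Definition hausdorff {R : realType} {M : Type} (D : M -> M -> R) (S T : set M) : R :=
  Num.max (sup [set r | exists2 x, S x & r = inf [set s | exists2 y, T y & s = D x y]])
          (sup [set r | exists2 y, T y & r = inf [set s | exists2 x, S x & s = D x y]]).

Definition rho {R : realType} (P Q : mms R -> Prop) : R :=
  rseries (fun k => (2 ^- k) * (k.*2%:R)^-1 *
                    hausdorff (@prokhorov R k) (Mset P k) (Mset Q k)) 1.

(** Fix a level k, some eps > 0 and a measure mu of M(sum_n P_n^{a_n}; k, k). Pushing
    forward the measures of the spaces X_n along the maps f_n writes mu as sum_n a_n mu_n
    with mu_n in M(P_n; k, k). For n <= M choose nu_n in M(Q_n; k, k) with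
    d_P(mu_n, nu_n) < H_n + eps, where H_n is the Hausdorff distance between M(P_n; k, k)
    and M(Q_n; k, k), and put the remaining mass sum_{n > M} b_n on the Dirac mass at the
    origin, which lies in every M(Q; k, k) because pyramids are closed downward. The
    resulting nu = sum_{n <= M} b_n nu_n + (sum_{n > M} b_n) delta_0 lies in
    M(sum_n Q_n^{b_n}; k, k) and, straight from the definition of d_P,
      d_P(mu, nu) <= sum_{n <= M} H_n + eps + sum_{n <= M} |a_n - b_n|
                     + sum_{n > M} a_n + sum_{n > M} b_n.
    The other direction is symmetric, so this also bounds the Hausdorff distance at
    level k. Summing over k with the weights 2^-k / (2k), whose total is at most 1/2,
    gives the inequality for rho. *)

From HB Require Import structures.
From mathcomp Require Import all_boot all_order all_algebra.
From mathcomp Require Import all_classical all_reals all_analysis.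
From mathcomp Require Import lra.
Import Order.TTheory GRing.Theory Num.Theory numFieldNormedType.Exports.
Local Open Scope ring_scope.
Local Open Scope classical_set_scope.

(** * Borel sets and probability measures of a distance *)

Section borel_d.
Context {R : realType} {T : Type} {d : T -> T -> R}.

Lemma borel_d_sigma_algebra : sigma_algebra setT (borel_d d).
Proof. exact: smallest_sigma_algebra. Qed.

Lemma borel_d_open U : is_open_d d U -> borel_d d U.
Proof. exact: sub_gen_smallest. Qed.

Lemma borel_d0 : borel_d d set0.
Proof. by case: borel_d_sigma_algebra. Qed.

Lemma borel_dC A : borel_d d A -> borel_d d (~` A).
Proof. by case: borel_d_sigma_algebra => _ dC _ /dC; rewrite setTD. Qed.

Lemma borel_dT : borel_d d setT.
Proof. by rewrite -setC0; apply: borel_dC; exact: borel_d0. Qed.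

Lemma borel_d_bigcup (F : nat -> set T) :
  (forall n, borel_d d (F n)) -> borel_d d (\bigcup_n F n).
Proof. by case: borel_d_sigma_algebra => _ _; apply. Qed.

Lemma borel_dU A B : borel_d d A -> borel_d d B -> borel_d d (A `|` B).
Proof.
by move=> dA dB; rewrite -bigcup2E; apply: borel_d_bigcup => -[|[|n]] //=; exact: borel_d0.
Qed.

Lemma borel_dI A B : borel_d d A -> borel_d d B -> borel_d d (A `&` B).
Proof.
move=> dA dB; rewrite -[A `&` B]setCK setCI.
by apply: borel_dC; apply: borel_dU; apply: borel_dC.
Qed.

Lemma borel_dD A B : borel_d d A -> borel_d d B -> borel_d d (A `\` B).
Proof. by move=> dA dB; rewrite setDE; apply: borel_dI => //; apply: borel_dC. Qed.

End borel_d.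

Lemma lip1_is_open_d_preimage {R : realType} {T U : Type} {dT : T -> T -> R}
    {dU : U -> U -> R} {g : T -> U} :
  lip1 dT dU g -> forall V, is_open_d dU V -> is_open_d dT (g @^-1` V).
Proof.
move=> g_lip V oV x /oV [r r0 Vr]; exists r => // y dxy; apply: Vr.
exact: le_lt_trans (g_lip x y) dxy.
Qed.

Lemma lip1_borel_d_preimage {R : realType} {T U : Type} {dT : T -> T -> R}
    {dU : U -> U -> R} {g : T -> U} :
  lip1 dT dU g -> forall B, borel_d dU B -> borel_d dT (g @^-1` B).
Proof.
move=> g_lip B dB.
suff : [set B | borel_d dT (g @^-1` B)] B by [].
apply: (smallest_sub _ _ dB) => [|V oV].
  split=> [|A dA|F dF] /=.
  - by rewrite preimage_set0; exact: borel_d0.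
  - by rewrite setTD preimage_setC; exact: borel_dC.
  - by rewrite preimage_bigcup; exact: borel_d_bigcup.
by apply: borel_d_open; exact: lip1_is_open_d_preimage.
Qed.

Section prob.
Context {R : realType} {T : Type} {d : T -> T -> R} {mu : set T -> R}.
Hypothesis mu_prob : is_prob_on (borel_d d) mu.

Lemma prob_setT : mu setT = 1.
Proof. by case: mu_prob. Qed.

Lemma prob_ge0 {A} : borel_d d A -> 0 <= mu A.
Proof. by case: mu_prob => _ [+ _]; apply. Qed.

Lemma prob_set0 : mu set0 = 0.
Proof.
have [_ [_ mu_sigma]] := mu_prob.
(* The partial sums of the constant series [mu set0] converge, so its terms tend to 0. *)
have := mu_sigma (fun=> set0) (fun=> borel_d0) (@trivIset_set0 _ _ setT).
rewrite bigcup0 // => sums_cvg.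
have : (fun n => \sum_(i < n.+1) mu set0 - \sum_(i < n) mu set0) @ \oo -->
         mu set0 - mu set0.
  by apply: cvgB => //; move: sums_cvg; rewrite -cvg_shiftS.
rewrite subrr (_ : (fun n => _) = fun=> mu set0); first exact: cvg_unique (cvg_cst _).
by apply/funext => n; rewrite big_ord_recr /= addrAC subrr add0r.
Qed.

Lemma prob_setU {A B} : borel_d d A -> borel_d d B -> A `&` B = set0 ->
  mu (A `|` B) = mu A + mu B.
Proof.
move=> dA dB; rewrite trivIset_bigcup2 => disj.
have dAB : forall n, borel_d d (bigcup2 A B n) by move=> [|[|n]] //=; exact: borel_d0.
have [_ [_ mu_sigma]] := mu_prob.
have := mu_sigma _ dAB disj; rewrite bigcup2E => sums_cvg.
have sums_eq : \forall n \near \oo, \sum_(i < n) mu (bigcup2 A B i) = mu A + mu B.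
  exists 2%N => // -[|[|n]] // _; rewrite !big_ord_recl big1 ?addr0 //= => i _.
  exact: prob_set0.
exact: cvg_unique _ sums_cvg (cvg_near_cst _ sums_eq).
Qed.

Lemma le_prob {A B} : borel_d d A -> borel_d d B -> A `<=` B -> mu A <= mu B.
Proof.
move=> dA dB AB; have dBA : borel_d d (B `\` A) by exact: borel_dD.
rewrite -(setDUK AB) prob_setU // ?lerDl ?prob_ge0 //.
by rewrite setDE setICA setICr setI0.
Qed.

Lemma prob_le1 {A} : borel_d d A -> mu A <= 1.
Proof. by move=> dA; rewrite -prob_setT le_prob //; exact: borel_dT. Qed.

Lemma prob_setIr_conull {A C} : borel_d d A -> borel_d d C -> mu (~` C) = 0 ->
  mu A = mu (A `&` C).
Proof.
move=> dA dC muC0.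
have dAC : borel_d d (A `&` C) by exact: borel_dI.
have dAnC : borel_d d (A `&` ~` C) by apply: borel_dI => //; exact: borel_dC.
rewrite -[in LHS](setIT A) -(setUv C) setIUr prob_setU //; last first.
  by rewrite setIACA setICr !setI0.
suff -> : mu (A `&` ~` C) = 0 by rewrite addr0.
apply/eqP; rewrite eq_le prob_ge0 // andbT -muC0 le_prob //; exact: borel_dC.
Qed.

Lemma prob_preimage_lip1 {U : Type} {e : U -> U -> R} {g : T -> U} :
  lip1 d e g -> is_prob_on (borel_d e) (fun B => mu (g @^-1` B)).
Proof.
move=> g_lip; have [mu1 [mu_ge0 mu_sigma]] := mu_prob.
split; first by rewrite preimage_setT mu1.
split=> [B dB|F dF disj]; first exact: mu_ge0 _ (lip1_borel_d_preimage g_lip _ dB).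
rewrite preimage_bigcup; apply: mu_sigma => [n|i j _ _ [x [Fi Fj]]].
  exact: (lip1_borel_d_preimage g_lip).
by apply: disj => //; exists (g x).
Qed.

End prob.

(** * The cube B^k_k with the sup distance *)

Section linf.
Context {R : realType} {k : nat}.
Implicit Types (x y z : 'I_k -> R).

Lemma linf_ge0 x y : 0 <= linf k x y.
Proof. by rewrite /linf; elim/big_ind: _ => // a b a0 b0; rewrite le_max a0. Qed.

Lemma ler_linf x y i : `|x i - y i| <= linf k x y.
Proof. exact: (le_bigmax 0 (fun i => `|x i - y i|) i). Qed.

Lemma linf_leP x y r : 0 <= r -> linf k x y <= r <-> forall i, `|x i - y i| <= r.
Proof.
move=> r0; split=> [xy i|xy]; first exact: le_trans (ler_linf x y i) xy.
by apply/bigmax_leP; split.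
Qed.

Lemma linf_ltP x y r : 0 < r -> linf k x y < r <-> forall i, `|x i - y i| < r.
Proof.
move=> r0; split=> [xy i|xy]; first exact: le_lt_trans (ler_linf x y i) xy.
by apply/bigmax_ltP; split.
Qed.

Lemma linfC x y : linf k x y = linf k y x.
Proof. by apply: eq_bigr => i _; rewrite distrC. Qed.

Lemma linf_triangle x y z : linf k x z <= linf k x y + linf k y z.
Proof.
apply/linf_leP => [|i]; first by rewrite addr_ge0 ?linf_ge0.
by apply: le_trans (ler_distD (y i) (x i) (z i)) _; rewrite lerD ?ler_linf.
Qed.

Lemma linf_eq0 x y : linf k x y = 0 <-> x = y.
Proof.
split=> [xy|->]; last first.
  by apply/eqP; rewrite eq_le linf_ge0 andbT; apply/linf_leP => // i; rewrite subrr normr0.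
apply/funext => i; apply/eqP; rewrite -subr_eq0 -normr_eq0 eq_le normr_ge0 andbT.
by rewrite -xy ler_linf.
Qed.

Lemma linfxx x : linf k x x = 0.
Proof. exact/linf_eq0. Qed.

Lemma is_open_d_cube_setC : is_open_d (@linf R k) (~` cube_set k).
Proof.
move=> x /= /negP; rewrite -ltNge => x_out.
exists (linf k x (fun=> 0) - k%:R) => [|y xy /= y_in]; first by rewrite subr_gt0.
by move: y_in; rewrite /cube_set /=; have := linf_triangle x y (fun=> 0); lra.
Qed.

Lemma borel_d_cube_set : borel_d (@linf R k) (cube_set k).
Proof.
rewrite -[cube_set k]setCK; apply: borel_dC; apply: borel_d_open.
exact: is_open_d_cube_setC.
Qed.

End linf.

Section cube.
Context {R : realType} {k : nat}.
Local Notation cube := (cube R k).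

Definition cube_dist (x y : cube) : R := linf k (sval x) (sval y).

Lemma cube_val_inj : injective (sval : cube -> 'I_k -> R).
Proof. by move=> [x x_in] [y y_in] /= xy; subst y; congr exist; exact: bool_irrelevance. Qed.

Lemma cube_dist_metric : is_metric cube_dist.
Proof.
split; first by move=> *; exact: linf_ge0.
split; first by move=> x y; split=> [/linf_eq0/cube_val_inj|->] //; rewrite /cube_dist linfxx.
split; first by move=> *; exact: linfC.
by move=> *; exact: linf_triangle.
Qed.

Lemma cube_coord_le (x : cube) i : `|sval x i| <= k%:R.
Proof. by case: x => x /= /(linf_leP _ _ _ (ler0n _ _)) /(_ i); rewrite subr0. Qed.

Lemma cube_dist_complete : is_complete_d cube_dist.
Proof.
move=> u u_cauchy; pose v i n := sval (u n) i.
have v_cvg i : cvgn (v i).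
  apply/cauchy_cvgP/cauchy_exP => e e0; have [N uN] := u_cauchy e e0.
  exists (v i N), N => // n /= Nn; rewrite /ball /=.
  by have /(linf_ltP _ _ _ e0) := uN N n (leqnn N) Nn; apply.
pose l i := limn (v i).
have vl i e : 0 < e -> exists N, forall n, (N <= n)%N -> `|l i - v i n| < e.
  by move=> e0; have /cvgrPdist_lt /(_ e e0) [N _ vN] := v_cvg i; exists N => n /vN.
have l_in : linf k l (fun=> 0) <= k%:R.
  apply/linf_leP => // i; rewrite subr0 leNgt; apply/negP => li.
  have li_gap : 0 < `|l i| - k%:R by rewrite subr_gt0.
  have [N vN] := vl i _ li_gap.
  have := vN N (leqnn N); have := cube_coord_le (u N) i.
  have := ler_distD (v i N) (l i) 0; rewrite !subr0 /v; lra.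
exists (exist _ l l_in) => e e0; have [N vN] := choice (fun i => vl i e e0).
exists (\max_(i < k) N i)%N => n n_ge; apply/linf_ltP => // i; rewrite distrC.
by apply: vN; exact: leq_trans (leq_bigmax i) n_ge.
Qed.

Definition clamp (t : R) : R :=
  if t < - k%:R then - k%:R else if k%:R < t then k%:R else t.

Lemma clamp_bound t : `|clamp t| <= k%:R.
Proof.
rewrite /clamp ler_norml; have := ler0n R k.
by case: (ltP t (- k%:R)) => ? ?; last case: (ltP k%:R t) => ?; apply/andP; split; lra.
Qed.

Lemma clamp_id t : `|t| <= k%:R -> clamp t = t.
Proof.
rewrite ler_norml /clamp => /andP[? ?].
by case: (ltP t (- k%:R)) => ?; last case: (ltP k%:R t) => ?; lra.
Qed.

Lemma clamp_lip1 s t : `|clamp s - clamp t| <= `|s - t|.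
Proof.
have := ler0n R k; have := ler_norm (s - t); have := ler_norm (t - s).
rewrite [`|t - s|]distrC ler_norml /clamp => ? ? ?.
case: (ltP s (- k%:R)) => ?; last case: (ltP k%:R s) => ?;
  case: (ltP t (- k%:R)) => ?; try case: (ltP k%:R t) => ?; apply/andP; split; lra.
Qed.

Definition clamp_cube (v : 'I_k -> R) : cube.
Proof.
by exists (fun i => clamp (v i)); apply/linf_leP => // i; rewrite subr0 clamp_bound.
Defined.

Definition cube_rat_seq (n : nat) : cube :=
  clamp_cube (fun i => if @unpickle {ffun 'I_k -> rat} n is Some q then ratr (q i) else 0).

Lemma cube_dist_separable : is_separable_d cube_dist.
Proof.
exists cube_rat_seq => x e e0.
have rat_near i : exists q : rat, ratr q \in `](sval x i - e), (sval x i + e)[%R.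
  by apply: rat_in_itvoo; lra.
have [q xq] := choice rat_near.
exists (pickle [ffun i => q i]); rewrite /cube_rat_seq pickleK.
apply/linf_ltP => // i /=; rewrite ffunE -{1}(clamp_id _ (cube_coord_le x i)).
apply: le_lt_trans (clamp_lip1 _ _) _.
by move: (xq i); rewrite in_itv /= ltr_norml => /andP[? ?]; apply/andP; split; lra.
Qed.

Lemma cube_val_preimage_image (A : set cube) : sval @^-1` (sval @` A) = A.
Proof.
apply/seteqP; split=> [x [y Ay /cube_val_inj <-] //|x Ax]; exact: preimage_image.
Qed.

Lemma cube_val_image_preimage (B : set ('I_k -> R)) :
  (sval : cube -> _) @` (sval @^-1` B) = B `&` cube_set k.
Proof.
apply/seteqP; split=> [y [x Bx <-]|y [By y_in]]; first by split=> //; exact: (proj2_sig x).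
by exists (exist _ y y_in).
Qed.

Lemma cube_val_imageT : (sval : cube -> _) @` setT = cube_set k.
Proof. by rewrite -(preimage_setT sval) cube_val_image_preimage setTI. Qed.

Lemma cube_val_imageC (A : set cube) : sval @` (~` A) = cube_set k `\` (sval @` A).
Proof.
apply/seteqP; split=> [y [x nAx <-]|y [y_in nAy]].
  by split=> [|[x' Ax' /cube_val_inj x'x]]; [exact: (proj2_sig x) | apply: nAx; rewrite -x'x].
by exists (exist _ y y_in) => // Ay; apply: nAy; exists (exist _ y y_in).
Qed.

Lemma borel_d_cube_val_image_open (A : set cube) : is_open_d cube_dist A ->
  borel_d (linf k) (sval @` A).
Proof.
move=> oA.
(* [V] is open in R^k and its trace on the cube is the image of [A]. *)
pose V := [set y | exists (x : cube) (r : R), [/\ A x, 0 < r,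
  forall z : cube, cube_dist x z < r -> A z & linf k (sval x) y < r]].
have oV : is_open_d (linf k) V.
  move=> y [x [r [Ax r0 xrA xy]]].
  exists (r - linf k (sval x) y) => [|y' yy']; first by rewrite subr_gt0.
  by exists x, r; split=> //; have := linf_triangle (sval x) y y'; lra.
suff -> : sval @` A = V `&` cube_set k.
  by apply: borel_dI; [exact: borel_d_open | exact: borel_d_cube_set].
apply/seteqP; split=> [y [x Ax <-]|y [[x [r [Ax r0 xrA xy]]] y_in]].
  split; last exact: (proj2_sig x).
  by have [r r0 xrA] := oA x Ax; exists x, r; split=> //; rewrite linfxx.
by exists (exist _ y y_in) => //; exact: xrA.
Qed.

Lemma borel_d_cube_val_image (A : set cube) : borel_d cube_dist A ->
  borel_d (linf k) (sval @` A).
Proof.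
move=> dA; suff : [set A | borel_d (linf k) (sval @` A)] A by [].
apply: (smallest_sub _ _ dA) => [|U /borel_d_cube_val_image_open //].
split=> [|B dB|F dF] /=.
- by rewrite image_set0; exact: borel_d0.
- by rewrite setTD cube_val_imageC; apply: borel_dD => //; exact: borel_d_cube_set.
- by rewrite image_bigcup; exact: borel_d_bigcup.
Qed.

Lemma cube_mmspace {mu : set ('I_k -> R) -> R} :
  is_prob_on (borel_d (linf k)) mu -> mu (~` cube_set k) = 0 ->
  is_mmspace (cube_mms k mu).
Proof.
move=> mu_prob mu_out; split; first exact: cube_dist_metric.
split; first exact: cube_dist_complete.
split; first exact: cube_dist_separable.
have [_ [_ mu_sigma]] := mu_prob.
change (is_prob_on (borel_d cube_dist) (fun A => mu (sval @` A))); split.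
  rewrite /= cube_val_imageT -[cube_set k]setTI.
  by rewrite -(prob_setIr_conull mu_prob borel_dT borel_d_cube_set mu_out) (prob_setT mu_prob).
split=> [A dA|F dF disj]; first by apply: (prob_ge0 mu_prob); exact: borel_d_cube_val_image.
rewrite /= image_bigcup; apply: mu_sigma => [n|i j _ _ [_ [[x Fix <-] [y Fjy xy]]]].
  exact: borel_d_cube_val_image.
by apply: disj => //; exists x; split=> //; rewrite -(cube_val_inj _ _ xy).
Qed.

End cube.

(** * Hausdorff and Prokhorov distances *)

Section inf_sup_itv01.
Context {R : realType} (E : set R).
Hypotheses (E_neq0 : E !=set0) (E01 : forall r, E r -> 0 <= r <= 1).

Lemma inf_itv01 : 0 <= inf E <= 1.
Proof.
have [r Er] := E_neq0; have /andP[_ r1] := E01 _ Er; apply/andP; split.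
  by apply: lb_le_inf => // s /E01 /andP[].
by apply: le_trans r1; apply: ge_inf Er; exists 0 => s /E01 /andP[].
Qed.

Lemma sup_itv01 : 0 <= sup E <= 1.
Proof.
have [r Er] := E_neq0; have /andP[r0 _] := E01 _ Er; apply/andP; split.
  by apply: le_trans r0 _; apply: ub_le_sup Er; exists 1 => s /E01 /andP[].
by apply: ge_sup => // s /E01 /andP[].
Qed.

End inf_sup_itv01.

Section hausdorff.
Context {R : realType} {U : Type} {D : U -> U -> R} {S T : set U}.
Hypotheses (S_neq0 : S !=set0) (T_neq0 : T !=set0)
  (D01 : forall x y, S x -> T y -> 0 <= D x y <= 1).

Let dist_to_T x := inf [set s | exists2 y, T y & s = D x y].
Let dist_to_S y := inf [set s | exists2 x, S x & s = D x y].

Let dist_to_T_itv01 x : S x -> 0 <= dist_to_T x <= 1.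
Proof.
move=> Sx; apply: inf_itv01 => [|_ [y Ty ->]]; last exact: D01.
by have [y Ty] := T_neq0; exists (D x y), y.
Qed.

Let dist_to_S_itv01 y : T y -> 0 <= dist_to_S y <= 1.
Proof.
move=> Ty; apply: inf_itv01 => [|_ [x Sx ->]]; last exact: D01.
by have [x Sx] := S_neq0; exists (D x y), x.
Qed.

Let sup_dist_to_T := sup [set r | exists2 x, S x & r = dist_to_T x].
Let sup_dist_to_S := sup [set r | exists2 y, T y & r = dist_to_S y].

Let sup_dist_to_T_itv01 : 0 <= sup_dist_to_T <= 1.
Proof.
apply: sup_itv01 => [|_ [x Sx ->]]; last exact: dist_to_T_itv01.
by have [x Sx] := S_neq0; exists (dist_to_T x), x.
Qed.

Let sup_dist_to_S_itv01 : 0 <= sup_dist_to_S <= 1.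
Proof.
apply: sup_itv01 => [|_ [y Ty ->]]; last exact: dist_to_S_itv01.
by have [y Ty] := T_neq0; exists (dist_to_S y), y.
Qed.

Lemma hausdorff_itv01 : 0 <= hausdorff D S T <= 1.
Proof.
have /andP[T0 T1] := sup_dist_to_T_itv01; have /andP[_ S1] := sup_dist_to_S_itv01.
rewrite /hausdorff le_max ge_max; apply/andP; split; first by apply/orP; left.
by apply/andP.
Qed.

Lemma hausdorff_approx_l {x e} : S x -> 0 < e ->
  exists2 y, T y & D x y < hausdorff D S T + e.
Proof.
move=> Sx e0; suff : dist_to_T x < hausdorff D S T + e.
  case/inf_lt => [|_ [y Ty ->]]; last by exists y.
  by have [y Ty] := T_neq0; exists (D x y), y.
apply: (@le_lt_trans _ _ sup_dist_to_T); last by rewrite /hausdorff ltr_pwDr // le_max lexx.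
by apply: ub_le_sup; [exists 1 => _ [x' Sx' ->]; case/andP: (dist_to_T_itv01 _ Sx') | exists x].
Qed.

Lemma hausdorff_approx_r {y e} : T y -> 0 < e ->
  exists2 x, S x & D x y < hausdorff D S T + e.
Proof.
move=> Ty e0; suff : dist_to_S y < hausdorff D S T + e.
  case/inf_lt => [|_ [x Sx ->]]; last by exists x.
  by have [x Sx] := S_neq0; exists (D x y), x.
apply: (@le_lt_trans _ _ sup_dist_to_S); last by rewrite /hausdorff ltr_pwDr // le_max lexx orbT.
by apply: ub_le_sup; [exists 1 => _ [y' Ty' ->]; case/andP: (dist_to_S_itv01 _ Ty') | exists y].
Qed.

Lemma hausdorff_le c :
  (forall x, S x -> exists2 y, T y & D x y <= c) ->
  (forall y, T y -> exists2 x, S x & D x y <= c) ->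
  hausdorff D S T <= c.
Proof.
move=> near_T near_S; rewrite /hausdorff ge_max; apply/andP; split; apply: ge_sup.
- by have [x Sx] := S_neq0; exists (dist_to_T x), x.
- move=> _ [x Sx ->]; have [y Ty xy] := near_T x Sx; apply: le_trans xy.
  by apply: ge_inf; [exists 0 => _ [y' Ty' ->]; case/andP: (D01 _ _ Sx Ty') | exists y].
- by have [y Ty] := T_neq0; exists (dist_to_S y), y.
- move=> _ [y Ty ->]; have [x Sx xy] := near_S y Ty; apply: le_trans xy.
  by apply: ge_inf; [exists 0 => _ [x' Sx' ->]; case/andP: (D01 _ _ Sx' Ty) | exists x].
Qed.

End hausdorff.

Section prokhorov.
Context {R : realType} {k : nat}.
Local Notation vec := ('I_k -> R).

Definition thicken (e : R) (A : set vec) := [set x | exists2 y, A y & linf k x y < e].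

Lemma borel_d_thicken e A : borel_d (linf k) (thicken e A).
Proof.
apply: borel_d_open => x [y Ay xy]; exists (e - linf k x y) => [|z xz].
  by rewrite subr_gt0.
by exists y => //; have := linf_triangle z x y; rewrite (linfC z x); lra.
Qed.

Lemma thicken_le e e' A : e <= e' -> thicken e A `<=` thicken e' A.
Proof. by move=> ee' x [y Ay xy]; exists y => //; exact: lt_le_trans ee'. Qed.

Definition prokhorov_adm (mu nu : set vec -> R) : set R := [set e | 0 < e /\
  forall A, borel_d (linf k) A -> nu A - e <= mu (thicken e A)].

Lemma prokhorov_le_adm {mu nu} e : prokhorov_adm mu nu e -> prokhorov k mu nu <= e.
Proof. by move=> adm_e; apply: ge_inf adm_e; exists 0 => e' [/ltW]. Qed.

Context {mu nu : set vec -> R}.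
Hypotheses (mu_prob : is_prob_on (borel_d (linf k)) mu)
  (nu_prob : is_prob_on (borel_d (linf k)) nu).

Lemma prokhorov_adm_le e e' : prokhorov_adm mu nu e -> e <= e' -> prokhorov_adm mu nu e'.
Proof.
move=> [e0 adm_e] ee'; split=> [|A dA]; first exact: lt_le_trans ee'.
have := adm_e A dA.
have := le_prob mu_prob (borel_d_thicken e A) (borel_d_thicken e' A) (thicken_le _ _ A ee').
lra.
Qed.

Lemma prokhorov_adm1 : prokhorov_adm mu nu 1.
Proof.
split=> // A dA; have := prob_le1 nu_prob dA.
have := prob_ge0 mu_prob (borel_d_thicken 1 A); lra.
Qed.

Lemma prokhorov_itv01 : 0 <= prokhorov k mu nu <= 1.
Proof.
rewrite prokhorov_le_adm ?andbT; last exact: prokhorov_adm1.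
by apply: lb_le_inf => [|e [/ltW]]; first by exists 1; exact: prokhorov_adm1.
Qed.

Lemma prokhorov_lt_adm e : prokhorov k mu nu < e -> prokhorov_adm mu nu e.
Proof.
have adm_neq0 : prokhorov_adm mu nu !=set0 by exists 1; exact: prokhorov_adm1.
by case/(inf_lt adm_neq0) => e' adm_e' /ltW; exact: prokhorov_adm_le.
Qed.

End prokhorov.

(** * Series with nonnegative terms and sequences of A_1 *)

Section nneg_series.
Context {R : realType} {u : nat -> R} {m : nat} {c : R}.
Hypotheses (u_ge0 : forall n, 0 <= u n) (u_bounded : forall n, \sum_(m <= i < n) u i <= c).

Lemma nondecreasing_partial_sum : nondecreasing_seq (fun n => \sum_(m <= i < n) u i).
Proof.
apply/nondecreasing_seqP => n; case: (leqP m n) => mn; last by rewrite !big_geq //; exact: ltnW.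
by rewrite big_nat_recr //= lerDl.
Qed.

Lemma rseries_cvg : (fun n => \sum_(m <= i < n) u i) @ \oo --> rseries u m.
Proof.
apply/cvg_ex; exists (sup (range (fun n => \sum_(m <= i < n) u i))).
apply: nondecreasing_cvgn nondecreasing_partial_sum _.
by exists c => _ [n _ <-].
Qed.

Lemma partial_sum_le_rseries n : \sum_(m <= i < n) u i <= rseries u m.
Proof. exact: nondecreasing_cvgn_le nondecreasing_partial_sum (cvgP _ rseries_cvg) n. Qed.

Lemma rseries_ge0 : 0 <= rseries u m.
Proof. by apply: le_trans (partial_sum_le_rseries m); rewrite big_geq. Qed.

Lemma rseries_le : rseries u m <= c.
Proof. by apply: cvgr_to_le rseries_cvg _; exact: nearW. Qed.

End nneg_series.

Section A1.
Context {R : realType} {N : option nat} {a : nat -> R}.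
Hypothesis a_A1 : inA1 N a.

Lemma pad_ge0 n : 0 <= pad N a n.
Proof. by rewrite /pad; case: ifP => // /a_A1.1 /andP[/ltW]. Qed.

Let partial_sum_pad_le1 m : \sum_(1 <= i < m) pad N a i <= 1.
Proof.
apply: cvgr_to_ge a_A1.2 _; exists m => // n /= mn.
exact: nondecreasing_partial_sum pad_ge0 _ _ mn.
Qed.

Lemma sum_pad_le1 M : (1 <= M)%N -> forall m, \sum_(M <= i < m) pad N a i <= 1.
Proof.
move=> M1 m; case: (leqP M m) => Mm; last by rewrite big_geq // ltnW.
apply: le_trans (partial_sum_pad_le1 m).
rewrite (@big_cat_nat _ _ _ M 1 m _ _ M1 Mm) /= lerDr.
by apply: sumr_ge0 => i _; exact: pad_ge0.
Qed.

Lemma sum_pad_add_rseries M : (1 <= M)%N ->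
  \sum_(1 <= i < M) pad N a i + rseries (pad N a) M = 1.
Proof.
move=> M1; have tail_cvg := rseries_cvg pad_ge0 (sum_pad_le1 M M1).
have sum_cvg : (fun m => \sum_(1 <= i < M) pad N a i + \sum_(M <= i < m) pad N a i)
    @ \oo --> (1 : R).
  apply: cvg_trans _ a_A1.2; apply: near_eq_cvg; exists M => // m /= Mm.
  by rewrite (@big_cat_nat _ _ _ M 1 m _ _ M1 Mm).
exact: cvg_unique _ (cvgD (cvg_cst _) tail_cvg) sum_cvg.
Qed.

End A1.

Lemma partial_sum_le_l1dist {R : realType} {N N'} {a b : nat -> R} M :
  inA1 N a -> inA1 N' b ->
  \sum_(1 <= n < M) `|pad N a n - pad N' b n| <= l1dist N a N' b.
Proof.
move=> a_A1 b_A1; apply: (@partial_sum_le_rseries _ _ _ 2) => // m.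
apply: (@le_trans _ _ (\sum_(1 <= n < m) (pad N a n + pad N' b n))).
  apply: ler_sum => n _; apply: le_trans (ler_normB _ _) _.
  by rewrite !ger0_norm ?pad_ge0.
rewrite big_split /=; have := sum_pad_le1 a_A1 1 isT m.
have := sum_pad_le1 b_A1 1 isT m; lra.
Qed.

Section pad_mul_series.
Context {R : realType} {N : option nat} {a : nat -> R} {x : nat -> R} {l : R}.
Hypotheses (a_A1 : inA1 N a)
  (pad_mul_cvg : (fun m => \sum_(1 <= n < m) pad N a n * x n) @ \oo --> l).

Lemma partial_sum_pad_mul_le M : (forall n, in_idx N n -> 0 <= x n) ->
  \sum_(1 <= n < M) pad N a n * x n <= l.
Proof.
move=> x_ge0; have term_ge0 n : 0 <= pad N a n * x n.
  case Nn: (in_idx N n); last by rewrite /pad Nn mul0r.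
  by rewrite mulr_ge0 ?(pad_ge0 a_A1) ?x_ge0.
by apply: cvgr_to_ge pad_mul_cvg _; exists M => // m /= Mm; exact: nondecreasing_partial_sum.
Qed.

Lemma le_partial_sum_pad_mul M : (1 <= M)%N -> (forall n, in_idx N n -> 0 <= x n <= 1) ->
  l <= \sum_(1 <= n < M) pad N a n * x n + rseries (pad N a) M.
Proof.
move=> M1 x01; apply: cvgr_to_le pad_mul_cvg _; exists M => // m /= Mm.
rewrite (@big_cat_nat _ _ _ M 1 m _ _ M1 Mm) /= lerD2l.
apply: le_trans (partial_sum_le_rseries (pad_ge0 a_A1) (sum_pad_le1 a_A1 M M1) m).
apply: ler_sum => n _; rewrite /pad; case: ifP => [Nn|]; last by rewrite mul0r.
by have [/andP[/ltW a0 _] /andP[_ x1]] := (a_A1.1 n Nn, x01 n Nn); rewrite ler_piMr.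
Qed.

End pad_mul_series.

Lemma in_idx_le {N M n} : in_idx N M -> (0 < n <= M)%N -> in_idx N n.
Proof.
rewrite /in_idx => /andP[_ NM] /andP[-> nM] /=.
by case: N NM => // N' MN'; exact: leq_trans MN'.
Qed.

(** * Measures of M(P; k, k) and of direct sums *)

Section dirac_origin.
Context {R : realType} {k : nat}.
Local Notation vec := ('I_k -> R).

Definition dirac_origin : set vec -> R := fun A => if `[< A (fun=> 0) >] then 1 else 0.

Lemma dirac_origin_itv01 A : 0 <= dirac_origin A <= 1.
Proof. by rewrite /dirac_origin; case: ifP; rewrite ?lexx ?ler01. Qed.

Lemma dirac_origin_prob : is_prob_on (borel_d (linf k)) dirac_origin.
Proof.
split; first by rewrite /dirac_origin asboolT.
split=> [A _|F _ disj]; first by case/andP: (dirac_origin_itv01 A).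
have [[n0 Fn0]|F_0] := pselect (exists n, F n (fun=> 0)).
  rewrite /dirac_origin asboolT; last by exists n0.
  apply: cvg_near_cst; exists n0.+1 => // m n0m.
  rewrite (bigD1 (Ordinal n0m)) //= asboolT // big1 ?addr0 // => i ni.
  case: ifP => // /asboolP Fi; case/eqP: ni; apply: val_inj => /=.
  by apply: disj => //; exists (fun=> 0).
rewrite /dirac_origin asboolF => [|[n _ Fn]]; last by apply: F_0; exists n.
apply: cvg_near_cst; apply: nearW => m; rewrite big1 // => i _.
by rewrite asboolF // => Fi; apply: F_0; exists i.
Qed.

Lemma cube_set_origin : cube_set k (fun=> 0 : R).
Proof. by rewrite /cube_set /= linfxx. Qed.

Lemma dirac_origin_cube_setC : dirac_origin (~` cube_set k) = 0.
Proof. by rewrite /dirac_origin asboolF //= => /(_ cube_set_origin). Qed.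

Definition cube_origin : cube R k := exist _ (fun=> 0) cube_set_origin.

End dirac_origin.

Section Mset.
Context {R : realType} {k : nat}.
Local Notation vec := ('I_k -> R).

Lemma Mset_pushforward (P : mms R -> Prop) (X : mms R) (f : mm_carrier X -> cube R k) :
  pyramid P -> P X -> lip1 (mm_dist X) cube_dist f ->
  Mset P k (fun B => mm_meas X (f @^-1` (sval @^-1` B))).
Proof.
move=> [P_mm [_ [P_down _]]] PX f_lip.
have [_ [_ [_ X_prob]]] := P_mm X PX.
have push_prob : is_prob_on (borel_d (linf k))
    (fun B => mm_meas X (f @^-1` (sval @^-1` B))).
  exact (prob_preimage_lip1 X_prob (f_lip : lip1 _ (linf k) (sval \o f))).
have push_out : mm_meas X (f @^-1` (sval @^-1` (~` cube_set k))) = 0.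
  rewrite (_ : _ @^-1` _ = set0) ?(prob_set0 X_prob) //.
  by apply/seteqP; split=> x //= /(_ (proj2_sig (f x))).
split=> //; split=> //; apply: (P_down _ _ PX (cube_mmspace push_prob push_out)).
by exists f; split=> // A dA /=; rewrite cube_val_preimage_image.
Qed.

Lemma Mset_dirac_origin (P : mms R -> Prop) : pyramid P -> Mset P k dirac_origin.
Proof.
move=> P_pyr; have [_ [[X PX] _]] := P_pyr; have [[d_ge0 _] [_ [_ X_prob]]] := P_pyr.1 X PX.
suff <- : (fun B : set vec => mm_meas X ((fun=> cube_origin) @^-1` (sval @^-1` B))) = dirac_origin.
  by apply: Mset_pushforward => // x y; rewrite /cube_dist linfxx.
apply/funext => B; rewrite /dirac_origin; case: (pselect (B (fun=> 0))) => [B0|nB0].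
  rewrite asboolT // (_ : _ @^-1` _ = setT) ?(prob_setT X_prob) //.
  by apply/seteqP; split=> // x _; exact: B0.
rewrite asboolF // (_ : _ @^-1` _ = set0) ?(prob_set0 X_prob) //.
by apply/seteqP; split=> // x /nB0.
Qed.

Lemma Mset_dsum_decomp {P : nat -> mms R -> Prop} {N} {a : nat -> R} {mu} :
  (forall n, in_idx N n -> pyramid (P n)) -> Mset (dsum N a P) k mu ->
  exists mus : nat -> set vec -> R,
    (forall n, in_idx N n -> Mset (P n) k (mus n)) /\
    (forall B, borel_d (linf k) B ->
      (fun m => \sum_(1 <= n < m) pad N a n * mus n B) @ \oo --> mu B).
Proof.
move=> P_pyr [mu_prob [mu_out [_ [Xs [f [Xs_f mu_sum]]]]]].
exists (fun n B => mm_meas (Xs n) (f n @^-1` (sval @^-1` B))); split.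
  by move=> n Nn; have [PX f_lip] := Xs_f n Nn; exact: Mset_pushforward (P_pyr n Nn) PX f_lip.
have sval_lip1 : lip1 (@cube_dist R k) (linf k) sval by [].
move=> B dB; have := mu_sum _ (lip1_borel_d_preimage sval_lip1 B dB).
by rewrite /= cube_val_image_preimage -(prob_setIr_conull mu_prob dB borel_d_cube_set mu_out).
Qed.

End Mset.

Lemma Mset_neq0 {R : realType} (k : nat) {P : mms R -> Prop} : pyramid P -> Mset P k !=set0.
Proof. by exists dirac_origin; exact: Mset_dirac_origin. Qed.

Lemma prokhorov_Mset_itv01 {R : realType} (k : nat) (P Q : mms R -> Prop) mu nu :
  Mset P k mu -> Mset Q k nu -> 0 <= prokhorov k mu nu <= 1.
Proof. by move=> [mu_prob _] [nu_prob _]; exact: prokhorov_itv01. Qed.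

Lemma hausdorff_Mset_itv01 {R : realType} (k : nat) (P Q : mms R -> Prop) :
  Mset P k !=set0 -> Mset Q k !=set0 ->
  0 <= hausdorff (prokhorov k) (Mset P k) (Mset Q k) <= 1.
Proof. by move=> P0 Q0; apply: hausdorff_itv01 => // mu nu; exact: prokhorov_Mset_itv01. Qed.

Section mixture.
Context {R : realType} {k : nat}.
Local Notation vec := ('I_k -> R).
Local Notation prob := (is_prob_on (borel_d (linf k))).

Definition mixture (M : nat) (w : nat -> R) (nus : nat -> set vec -> R) (t : R) : set vec -> R :=
  fun B => \sum_(1 <= n < M) w n * nus n B + t * dirac_origin B.

Lemma mixture_prob M w nus t :
  (forall n, (1 <= n < M)%N -> prob (nus n)) -> (forall n, (1 <= n < M)%N -> 0 <= w n) ->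
  0 <= t -> \sum_(1 <= n < M) w n + t = 1 -> prob (mixture M w nus t).
Proof.
move=> nus_prob w_ge0 t_ge0 w_sum; split.
  rewrite /mixture /dirac_origin asboolT // mulr1 -w_sum; congr (_ + _).
  by apply: eq_big_nat => n Mn; rewrite (prob_setT (nus_prob n Mn)) mulr1.
split=> [A dA|F dF disj].
  rewrite /mixture addr_ge0 ?mulr_ge0 //; last by case/andP: (dirac_origin_itv01 A).
  rewrite big_nat_cond sumr_ge0 // => n /andP[Mn _].
  by rewrite mulr_ge0 ?w_ge0 // (prob_ge0 (nus_prob n Mn)).
have mixture_sum m : \sum_(i < m) mixture M w nus t (F i) =
    \sum_(1 <= n < M) w n * (\sum_(i < m) nus n (F i)) + t * \sum_(i < m) dirac_origin (F i).
  rewrite big_split /= exchange_big -mulr_sumr; congr (_ + _).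
  by apply: eq_bigr => n _; rewrite mulr_sumr.
under eq_fun do rewrite mixture_sum.
apply: cvgD; last by apply: cvgMr; case: (@dirac_origin_prob R k) => _ [_]; apply.
rewrite /mixture big_nat_cond; under eq_fun do rewrite big_nat_cond.
apply: (cvg_big (@add_continuous R^o)) => // n /andP[Mn _].
by apply: cvgMr; have [_ [_]] := nus_prob n Mn; apply.
Qed.

Lemma mixture_cube_setC M w nus t :
  (forall n, (1 <= n < M)%N -> nus n (~` cube_set k) = 0) -> mixture M w nus t (~` cube_set k) = 0.
Proof.
move=> nus_out; rewrite /mixture dirac_origin_cube_setC mulr0 addr0 big_nat_cond big1 // => n.
by case/andP=> Mn _; rewrite nus_out // mulr0.
Qed.

Lemma Mset_dsum_mixture (Q : nat -> mms R -> Prop) N b M nus :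
  (forall n, in_idx N n -> pyramid (Q n)) -> inA1 N b -> in_idx N M ->
  (forall n, (1 <= n < M.+1)%N -> Mset (Q n) k (nus n)) ->
  Mset (dsum N b Q) k (mixture M.+1 (pad N b) nus (rseries (pad N b) M.+1)).
Proof.
move=> Q_pyr b_A1 NM nus_Q; set tail := rseries (pad N b) M.+1.
have mix_prob : prob (mixture M.+1 (pad N b) nus tail).
  apply: mixture_prob => [n /nus_Q [] //|n _||].
  - exact: pad_ge0.
  - exact: rseries_ge0 (pad_ge0 b_A1) (sum_pad_le1 b_A1 M.+1 isT).
  - exact: sum_pad_add_rseries.
have mix_out : mixture M.+1 (pad N b) nus tail (~` cube_set k) = 0.
  by apply: mixture_cube_setC => n /nus_Q [_ []].
split=> //; split=> //; split; first exact: cube_mmspace.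
(* The direct sum is realised with X_n the cube carrying nu_n (delta_0 for n > M)
   and f_n the identity. *)
pose nus' n := if (1 <= n < M.+1)%N then nus n else dirac_origin.
exists (fun n => cube_mms k (nus' n)), (fun n x => x); split.
  move=> n Nn; split=> //; rewrite /nus'; case: ifP => [/nus_Q [_ []] //|_].
  exact: (Mset_dirac_origin _ (Q_pyr n Nn)).2.2.
move=> A dA; set B := sval @` A.
have tail_cvg := rseries_cvg (pad_ge0 b_A1) (sum_pad_le1 b_A1 M.+1 isT).
apply: cvg_trans (cvgD (cvg_cst _) (cvgM tail_cvg (cvg_cst (dirac_origin B)))).
apply: near_eq_cvg; exists M.+1 => // m /= Mm; rewrite !fctE.
rewrite (@big_cat_nat _ _ _ M.+1 1 m) //= mulr_suml; congr (_ + _).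
  by apply: eq_big_nat => n Mn; rewrite /nus' Mn.
apply: eq_big_nat => n /andP[Mn _].
by rewrite /nus' ltnS (leqNgt n M) Mn andbF.
Qed.

Lemma Mset_dsum_neq0 {P : nat -> mms R -> Prop} {N a M} :
  (forall n, in_idx N n -> pyramid (P n)) -> inA1 N a -> in_idx N M ->
  Mset (dsum N a P) k !=set0.
Proof.
move=> P_pyr a_A1 NM; exists (mixture M.+1 (pad N a) (fun=> dirac_origin) (rseries (pad N a) M.+1)).
by apply: Mset_dsum_mixture => // n /(in_idx_le NM) /P_pyr /Mset_dirac_origin.
Qed.

End mixture.

(** * The levelwise estimate *)

Section prokhorov_mixture.
Context {R : realType} {k : nat}.
Local Notation vec := ('I_k -> R).
Local Notation prob := (is_prob_on (borel_d (linf k))).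

Lemma prokhorov_adm_mixture {M} {wa wb : nat -> R} {mus nus : nat -> set vec -> R}
    {mu nu : set vec -> R} {E t : R} :
  prob mu -> (forall n, (1 <= n < M)%N -> prob (nus n)) ->
  (forall n, (1 <= n < M)%N -> prokhorov_adm (mus n) (nus n) E) ->
  0 < E -> 0 <= t -> (forall n, (1 <= n < M)%N -> 0 <= wa n) -> \sum_(1 <= n < M) wa n <= 1 ->
  (forall B, borel_d (linf k) B -> \sum_(1 <= n < M) wa n * mus n B <= mu B) ->
  (forall B, borel_d (linf k) B -> nu B <= \sum_(1 <= n < M) wb n * nus n B + t) ->
  prokhorov_adm mu nu (E + (\sum_(1 <= n < M) `|wa n - wb n| + t)).
Proof.
move=> mu_prob nus_prob adm_E E0 t_ge0 wa_ge0 wa_le1 mu_ge nu_le.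
set S := \sum_(1 <= n < M) `|wa n - wb n|.
have S_ge0 : 0 <= S by apply: sumr_ge0.
split=> [|A dA]; first lra.
have reweight : \sum_(1 <= n < M) wb n * nus n A <= \sum_(1 <= n < M) wa n * nus n A + S.
  rewrite -big_split /= big_nat_cond [leRHS]big_nat_cond.
  apply: ler_sum => n /andP[Mn _].
  have [nus0 nus1] := (prob_ge0 (nus_prob n Mn) dA, prob_le1 (nus_prob n Mn) dA).
  suff : (wb n - wa n) * nus n A <= `|wa n - wb n| by lra.
  apply: le_trans (ler_norm _) _; rewrite normrM distrC (ger0_norm nus0).
  by rewrite ler_piMr ?normr_ge0.
have transport : \sum_(1 <= n < M) wa n * nus n A <=
    \sum_(1 <= n < M) wa n * mus n (thicken E A) + E.
  apply: (@le_trans _ _ (\sum_(1 <= n < M) wa n * (mus n (thicken E A) + E))).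
    rewrite big_nat_cond [leRHS]big_nat_cond; apply: ler_sum => n /andP[Mn _].
    by rewrite ler_wpM2l ?wa_ge0 // -lerBlDr; case: (adm_E n Mn) => _; apply.
  under eq_bigr do rewrite mulrDr.
  by rewrite big_split /= -mulr_suml lerD2l ler_piMl // ltW.
have := le_prob mu_prob (borel_d_thicken E A) (borel_d_thicken (E + (S + t)) A)
  (thicken_le _ _ A (ler_wpDr _ _)).
have := mu_ge _ (borel_d_thicken E A); have := nu_le _ dA; lra.
Qed.

End prokhorov_mixture.

Section hausdorff_Mset_dsum.
Context {R : realType} (k : nat) (P Q : nat -> mms R -> Prop) (N N' : option nat)
  (a b : nat -> R) (M : nat).
Hypotheses (a_A1 : inA1 N a) (b_A1 : inA1 N' b)
  (P_pyr : forall n, in_idx N n -> pyramid (P n))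
  (Q_pyr : forall n, in_idx N' n -> pyramid (Q n))
  (NM : in_idx N M) (N'M : in_idx N' M).
Local Notation H n := (hausdorff (prokhorov k) (Mset (P n) k) (Mset (Q n) k)).

Let ta := rseries (pad N a) M.+1.
Let tb := rseries (pad N' b) M.+1.
Let ta_ge0 : 0 <= ta. Proof. exact: rseries_ge0 (pad_ge0 a_A1) (sum_pad_le1 a_A1 M.+1 isT). Qed.
Let tb_ge0 : 0 <= tb. Proof. exact: rseries_ge0 (pad_ge0 b_A1) (sum_pad_le1 b_A1 M.+1 isT). Qed.
Let slack := \sum_(1 <= n < M.+1) `|pad N a n - pad N' b n| + ta + tb.

Let P_Q_pyr {n} : (1 <= n < M.+1)%N -> pyramid (P n) /\ pyramid (Q n).
Proof. by move=> Mn; split; [apply/P_pyr/(in_idx_le NM) | apply/Q_pyr/(in_idx_le N'M)]. Qed.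

Let H_itv01 n : (1 <= n < M.+1)%N -> 0 <= H n <= 1.
Proof. by case/P_Q_pyr => P_n Q_n; apply: hausdorff_Mset_itv01; apply: Mset_neq0. Qed.

(* The sum of all the H n serves as a common admissible radius for every n <= M. *)
Let H_le_sum {n} : (1 <= n < M.+1)%N -> H n <= \sum_(1 <= i < M.+1) H i.
Proof.
move=> Mn; rewrite (bigD1_seq n) ?mem_index_iota ?iota_uniq //= lerDl.
rewrite big_seq_cond; apply: sumr_ge0 => i /andP[]; rewrite mem_index_iota.
by move=> /H_itv01 /andP[].
Qed.

Let sum_H_ge0 : 0 <= \sum_(1 <= i < M.+1) H i.
Proof.
rewrite big_seq_cond sumr_ge0 // => i /andP[].
by rewrite mem_index_iota => /H_itv01 /andP[].
Qed.

Let E0 {eps} : 0 < eps -> 0 < \sum_(1 <= n < M.+1) H n + eps.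
Proof. by move=> eps0; have := sum_H_ge0; lra. Qed.

Let slack_bound {eps S} :
  \sum_(1 <= n < M.+1) H n + eps + (S + tb) <= \sum_(1 <= n < M.+1) H n + (S + ta + tb) + eps.
Proof. by have := ta_ge0; lra. Qed.

Lemma Mset_dsum_approx_l {eps mu} : 0 < eps -> Mset (dsum N a P) k mu ->
  exists2 nu, Mset (dsum N' b Q) k nu &
    prokhorov k mu nu <= \sum_(1 <= n < M.+1) H n + slack + eps.
Proof.
move=> eps0 mu_dsum; have [mus [mus_P mu_cvg]] := Mset_dsum_decomp P_pyr mu_dsum.
have close_nu n : exists nu_n, (1 <= n < M.+1)%N ->
    Mset (Q n) k nu_n /\ prokhorov k (mus n) nu_n < H n + eps.
  case: (boolP (1 <= n < M.+1)%N) => Mn; last by exists dirac_origin.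
  have [P_n Q_n] := P_Q_pyr Mn.
  have [nu_n Qn_nu close] := hausdorff_approx_l (Mset_neq0 k Q_n)
    (@prokhorov_Mset_itv01 _ k _ _) (mus_P n (in_idx_le NM Mn)) eps0.
  by exists nu_n.
have [nus nus_Q] := choice close_nu.
set nu := mixture M.+1 (pad N' b) nus tb.
have nu_dsum : Mset (dsum N' b Q) k nu by apply: Mset_dsum_mixture => // n /nus_Q [].
exists nu => //; apply: prokhorov_le_adm.
have adm_n n : (1 <= n < M.+1)%N -> prokhorov_adm (mus n) (nus n) (\sum_(1 <= i < M.+1) H i + eps).
  move=> Mn; have [[nu_n_prob _] close] := nus_Q n Mn.
  have [mu_n_prob _] := mus_P n (in_idx_le NM Mn).
  apply: prokhorov_lt_adm mu_n_prob nu_n_prob _ _.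
  by apply: lt_le_trans close _; rewrite lerD2r H_le_sum.
have mus_le_mu B : borel_d (linf k) B -> \sum_(1 <= n < M.+1) pad N a n * mus n B <= mu B.
  move=> dB; apply: partial_sum_pad_mul_le a_A1 (mu_cvg B dB) _ _ => n Nn /=.
  by have [mu_n_prob _] := mus_P n Nn; exact: (prob_ge0 mu_n_prob dB).
have nu_le B : borel_d (linf k) B -> nu B <= \sum_(1 <= n < M.+1) pad N' b n * nus n B + tb.
  by move=> dB; rewrite lerD2l ler_piMr //; case/andP: (dirac_origin_itv01 B).
have nus_prob n : (1 <= n < M.+1)%N -> is_prob_on (borel_d (linf k)) (nus n).
  by case/nus_Q => [[]].
have [mu_prob _] := mu_dsum.
have := prokhorov_adm_mixture mu_prob nus_prob adm_n (E0 eps0) tb_ge0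
  (fun n _ => pad_ge0 a_A1 n) (sum_pad_le1 a_A1 1 isT M.+1) mus_le_mu nu_le.
by move/(prokhorov_adm_le mu_prob); apply; exact: slack_bound.
Qed.

Lemma Mset_dsum_approx_r {eps nu} : 0 < eps -> Mset (dsum N' b Q) k nu ->
  exists2 mu, Mset (dsum N a P) k mu &
    prokhorov k mu nu <= \sum_(1 <= n < M.+1) H n + slack + eps.
Proof.
move=> eps0 nu_dsum; have [nus [nus_Q nu_cvg]] := Mset_dsum_decomp Q_pyr nu_dsum.
have close_mu n : exists mu_n, (1 <= n < M.+1)%N ->
    Mset (P n) k mu_n /\ prokhorov k mu_n (nus n) < H n + eps.
  case: (boolP (1 <= n < M.+1)%N) => Mn; last by exists dirac_origin.
  have [P_n Q_n] := P_Q_pyr Mn.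
  have [mu_n Pn_mu close] := hausdorff_approx_r (Mset_neq0 k P_n)
    (@prokhorov_Mset_itv01 _ k _ _) (nus_Q n (in_idx_le N'M Mn)) eps0.
  by exists mu_n.
have [mus mus_P] := choice close_mu.
set mu := mixture M.+1 (pad N a) mus ta.
have mu_dsum : Mset (dsum N a P) k mu by apply: Mset_dsum_mixture => // n /mus_P [].
exists mu => //; apply: prokhorov_le_adm.
have adm_n n : (1 <= n < M.+1)%N -> prokhorov_adm (mus n) (nus n) (\sum_(1 <= i < M.+1) H i + eps).
  move=> Mn; have [[mu_n_prob _] close] := mus_P n Mn.
  have [nu_n_prob _] := nus_Q n (in_idx_le N'M Mn).
  apply: prokhorov_lt_adm mu_n_prob nu_n_prob _ _.
  by apply: lt_le_trans close _; rewrite lerD2r H_le_sum.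
have mus_le_mu B : borel_d (linf k) B -> \sum_(1 <= n < M.+1) pad N a n * mus n B <= mu B.
  by move=> dB; rewrite lerDl mulr_ge0 //; case/andP: (dirac_origin_itv01 B).
have nu_le B : borel_d (linf k) B -> nu B <= \sum_(1 <= n < M.+1) pad N' b n * nus n B + tb.
  move=> dB; apply: (le_partial_sum_pad_mul b_A1 (nu_cvg B dB) M.+1 isT) => n Nn.
  by have [nu_n_prob _] := nus_Q n Nn; rewrite (prob_ge0 nu_n_prob dB) (prob_le1 nu_n_prob dB).
have nus_prob n : (1 <= n < M.+1)%N -> is_prob_on (borel_d (linf k)) (nus n).
  by move=> /(in_idx_le N'M) /nus_Q [].
have [mu_prob _] := mu_dsum.
have := prokhorov_adm_mixture mu_prob nus_prob adm_n (E0 eps0) tb_ge0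
  (fun n _ => pad_ge0 a_A1 n) (sum_pad_le1 a_A1 1 isT M.+1) mus_le_mu nu_le.
by move/(prokhorov_adm_le mu_prob); apply; exact: slack_bound.
Qed.

Lemma hausdorff_Mset_dsum_le :
  hausdorff (prokhorov k) (Mset (dsum N a P) k) (Mset (dsum N' b Q) k) <=
  \sum_(1 <= n < M.+1) H n + slack.
Proof.
apply/ler_addgt0Pr => eps eps0; apply: hausdorff_le.
- exact: Mset_dsum_neq0 P_pyr a_A1 NM.
- exact: Mset_dsum_neq0 Q_pyr b_A1 N'M.
- by move=> mu nu; exact: prokhorov_Mset_itv01.
- by move=> mu /(Mset_dsum_approx_l eps0) [nu]; exists nu.
- by move=> nu /(Mset_dsum_approx_r eps0) [mu]; exists mu.
Qed.

End hausdorff_Mset_dsum.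

(** * The metric rho *)

Section rho_weight.
Context {R : realType}.

Definition rho_weight (k : nat) : R := 2 ^- k * (k.*2%:R)^-1.

Lemma rho_weight_ge0 k : 0 <= rho_weight k.
Proof. by rewrite mulr_ge0 // invr_ge0 // exprn_ge0. Qed.

Lemma sum_rho_weight_le K : \sum_(1 <= k < K) rho_weight k <= 2^-1.
Proof.
have geom K' : \sum_(1 <= k < K'.+1) (2 ^- k : R) = 1 - 2 ^- K'.
  elim: K' => [|K' IH]; first by rewrite big_geq // expr0 invr1 subrr.
  by rewrite big_nat_recr //= IH exprS invfM; lra.
case: K => [|K]; first by rewrite big_geq.
apply: (@le_trans _ _ (\sum_(1 <= k < K.+1) 2 ^- k * 2^-1)).
  apply: ler_sum_nat => k /andP[k1 _]; rewrite ler_wpM2l ?invr_ge0 ?exprn_ge0 //.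
  rewrite lef_pV2 ?posrE ?ltr0n ?double_gt0 // ler_nat.
  by rewrite -[2%N]/(1.*2)%N leq_double.
rewrite -mulr_suml geom; have : 0 <= (2 ^- K : R) by rewrite invr_ge0 exprn_ge0.
lra.
Qed.

Lemma weighted_rseries_le (H : nat -> R) (G : nat -> nat -> R) M c :
  (forall k, 0 <= H k <= 1) -> (forall n k, (1 <= n < M)%N -> 0 <= G n k <= 1) ->
  0 <= c -> (forall k, H k <= \sum_(1 <= n < M) G n k + c) ->
  rseries (fun k => rho_weight k * H k) 1 <=
    \sum_(1 <= n < M) rseries (fun k => rho_weight k * G n k) 1 + 2^-1 * c.
Proof.
move=> H01 G01 c_ge0 H_le.
have weighted_le (F : nat -> R) : (forall k, 0 <= F k <= 1) ->
    (forall k, 0 <= rho_weight k * F k) /\ forall K, \sum_(1 <= k < K) rho_weight k * F k <= 2^-1.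
  move=> F01; split=> [k|K]; first by case/andP: (F01 k) => F0 _; rewrite mulr_ge0 ?rho_weight_ge0.
  apply: le_trans (sum_rho_weight_le K); apply: ler_sum => k _.
  by case/andP: (F01 k) => F0 F1; rewrite ler_piMr ?rho_weight_ge0.
have [wH_ge0 _] := weighted_le H H01.
apply: rseries_le wH_ge0 _ => K.
apply: (@le_trans _ _ (\sum_(1 <= k < K) rho_weight k * (\sum_(1 <= n < M) G n k + c))).
  by apply: ler_sum => k _; rewrite ler_wpM2l ?rho_weight_ge0.
have -> : \sum_(1 <= k < K) rho_weight k * (\sum_(1 <= n < M) G n k + c) =
    \sum_(1 <= n < M) \sum_(1 <= k < K) rho_weight k * G n k + (\sum_(1 <= k < K) rho_weight k) * c.
  rewrite mulr_suml exchange_big -big_split /=; apply: eq_bigr => k _.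
  by rewrite mulrDr mulr_sumr.
apply: lerD; last by rewrite ler_wpM2r ?sum_rho_weight_le.
rewrite big_nat_cond [leRHS]big_nat_cond; apply: ler_sum => n /andP[Mn _].
by have [wG_ge0 wG_le] := weighted_le _ (G01 n ^~ Mn); exact: partial_sum_le_rseries wG_ge0 wG_le K.
Qed.

End rho_weight.

Lemma rho_le_sum {R : realType} (X Y : mms R -> Prop) (Ps Qs : nat -> mms R -> Prop) M c :
  (forall k, Mset X k !=set0 /\ Mset Y k !=set0) ->
  (forall n k, (1 <= n < M)%N -> Mset (Ps n) k !=set0 /\ Mset (Qs n) k !=set0) -> 0 <= c ->
  (forall k, hausdorff (prokhorov k) (Mset X k) (Mset Y k) <=
     \sum_(1 <= n < M) hausdorff (prokhorov k) (Mset (Ps n) k) (Mset (Qs n) k) + c) ->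
  rho X Y <= \sum_(1 <= n < M) rho (Ps n) (Qs n) + 2^-1 * c.
Proof.
move=> XY_neq0 PsQs_neq0 c_ge0 H_le; apply: weighted_rseries_le c_ge0 H_le.
  by move=> k; have [X0 Y0] := XY_neq0 k; exact: hausdorff_Mset_itv01.
by move=> n k Mn; have [P0 Q0] := PsQs_neq0 n k Mn; exact: hausdorff_Mset_itv01.
Qed.

Local Close Scope classical_set_scope.

Theorem corollary3p15 (R : realType) (N N' : option nat) (a b : nat -> R)
  (P Q : nat -> mms R -> Prop) (M : nat) :
  inA1 N a -> inA1 N' b ->
  (forall n, in_idx N n -> pyramid (P n)) ->
  (forall n, in_idx N' n -> pyramid (Q n)) ->
  in_idx N M -> in_idx N' M ->
  rho (dsum N a P) (dsum N' b Q) <=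
    \sum_(1 <= n < M.+1) rho (P n) (Q n) + 2^-1 * l1dist N a N' b
    + 2^-1 * rseries (pad N a) M.+1 + 2^-1 * rseries (pad N' b) M.+1.
Proof.
move=> a_A1 b_A1 P_pyr Q_pyr NM N'M.
set S := \sum_(1 <= n < M.+1) `|pad N a n - pad N' b n|.
set ta := rseries (pad N a) M.+1; set tb := rseries (pad N' b) M.+1.
have ta_ge0 : 0 <= ta := rseries_ge0 (pad_ge0 a_A1) (sum_pad_le1 a_A1 M.+1 isT).
have tb_ge0 : 0 <= tb := rseries_ge0 (pad_ge0 b_A1) (sum_pad_le1 b_A1 M.+1 isT).
have S_ge0 : 0 <= S by apply: sumr_ge0.
have S_le : S <= l1dist N a N' b := partial_sum_le_l1dist M.+1 a_A1 b_A1.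
apply: (@le_trans _ _ (\sum_(1 <= n < M.+1) rho (P n) (Q n) + 2^-1 * (S + ta + tb))); last lra.
apply: rho_le_sum; last by move=> k; exact: hausdorff_Mset_dsum_le.
- by move=> k; split; [exact: Mset_dsum_neq0 P_pyr a_A1 NM | exact: Mset_dsum_neq0 Q_pyr b_A1 N'M].
- move=> n k Mn; split; apply: Mset_neq0.
    exact/P_pyr/(in_idx_le NM).
  exact/Q_pyr/(in_idx_le N'M).
- by rewrite !addr_ge0.
Qed.
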